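(* For every positive integer $n$, the function $\tilde B_n(h)$ is strictly increasing on $(0,d_n)$, i.e. $\tilde B_n'(h)>0$ for all $h\in(0,d_n)$, and $\lim_{h\to0}\tilde B_n(h)=0$.
   Context: Let $n$ be a positive integer, $d_n=\frac{n(n+1)^{2/n}}{2(n+2)}$, $W(u)=\frac{u^2}{2}-\frac{u^{n+2}}{(n+1)(n+2)}$ and $H(u,v)=\frac{v^2}{2}+W(u)$, the Hamiltonian of the system $u'=v$, $v'=-u+\frac{1}{n+1}u^{n+1}$. For $h\in(0,d_n)$ let $\Gamma_h$ be the periodic orbit of this system contained in $\{H=h\}$ surrounding the center $(0,0)$, oriented clockwise. Define $B_n(h)=\oint_{\Gamma_h}u^n v\,du$, $B_0(h)=\oint_{\Gamma_h}v\,du$ and $\tilde B_n(h)=B_n(h)/B_0(h)$. *)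

From Stdlib Require Import Reals.
From Coquelicot Require Import Coquelicot.
Open Scope R_scope.

Definition d_n (n : nat) : R :=
  INR n * Rpower (INR n + 1) (2 / INR n) / (2 * (INR n + 2)).

Definition W (n : nat) (u : R) : R :=
  u ^ 2 / 2 - u ^ (n + 2) / ((INR n + 1) * (INR n + 2)).

Definition H (n : nat) (u v : R) : R := v ^ 2 / 2 + W n u.

(* c_n = (n+1)^(1/n): the nonzero critical points of W are at u = c_n
   (and u = -c_n when n is even); W(+-c_n) = d_n. *)
Definition c_n (n : nat) : R := Rpower (INR n + 1) (1 / INR n).

(* For h in (0,d_n), the oval Gamma_h is {H = h} /\ {-c_n < u < c_n}; its
   projection to the u-axis is the interval {u in (-c_n,c_n) | W u <= h}
   = [u_-(h), u_+(h)], and on it v = +- sqrt(2(h - W u)).  With clockwise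
   orientation (upper branch v>0 traversed left-to-right, lower branch v<0
   right-to-left), the line integral is
     oint_{Gamma_h} u^k v du = 2 * int_{u_-}^{u_+} u^k sqrt(2(h - W u)) du. *)
Definition oval_integrand (n k : nat) (h u : R) : R :=
  if Rlt_dec (W n u) h then u ^ k * sqrt (2 * (h - W n u)) else 0.

Definition oval_int (n k : nat) (h : R) : R :=
  2 * RInt (oval_integrand n k h) (- c_n n) (c_n n).

Definition B (n : nat) (h : R) : R := oval_int n n h.
Definition B0 (n : nat) (h : R) : R := oval_int n 0 h.
Definition Btilde (n : nat) (h : R) : R := B n h / B0 n h.

(* Write [r = sqrt (2 h)] and let [Y] be the branch through [y = 1] of the inverse of
   [P y = y^n (1 - y^2)].  With [kappa = 2 / ((n+1)(n+2))], the substitution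
   [u = r sin t / Y (kappa (r sin t)^n)] maps [t in [-pi/2, pi/2]] onto the oval and turns
   [W u] into [(r sin t)^2 / 2], so that [sqrt (2 (h - W u)) = r cos t].  This gives
   [B_0 = 2 r^2 J Phi r] and [B_n = 2 (n+1) r^2 (J Phi r - J Y r)], where
   [J F r] is the integral of [cos^2 t F (kappa (r sin t)^n)] over [[-pi/2, pi/2]] and
   [Phi = 2 Y / ((n+2) Y^2 - n)]; hence [Btilde_n = (n+1) (1 - J Y r / J Phi r)].
   At [r = 0] both averages equal [1].  Pairing [t] with [-t] reduces the sign of the
   [r]-derivatives of [J Y] and [J Phi] to the signs of [Y'] and [Phi'] and of their odd
   parts, which follow from [Y s < 1 < Y (-s)] for [s > 0]: [J Y] decreases and [J Phi]
   increases. *)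

From Stdlib Require Import Reals Lra Lia ClassicalEpsilon Ranalysis5.
From Coquelicot Require Import Coquelicot.
Open Scope R_scope.

Lemma ex_derive_continuity_pt (f : R -> R) x : ex_derive f x -> continuity_pt f x.
Proof. intros Hf. apply continuity_pt_filterlim, (ex_derive_continuous f), Hf. Qed.

Lemma is_derive_continuity_pt (f : R -> R) x l : is_derive f x l -> continuity_pt f x.
Proof. intros Hf. apply ex_derive_continuity_pt. exists l; exact Hf. Qed.

Lemma continuity_2d_pt_continuous_r (f : R -> R -> R) x y :
  continuity_2d_pt f x y -> continuous (f x) y.
Proof.
  intros Hf. apply continuity_pt_filterlim. intros eps Heps.
  destruct (Hf (mkposreal eps Heps)) as [d Hd]. exists d. split; [apply cond_pos|].
  intros v [_ Hv]. apply Hd; [|exact Hv]. rewrite Rminus_eq_0, Rabs_R0. apply cond_pos.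
Qed.

Lemma continuity_2d_pt_sin r t : continuity_2d_pt (fun _ v => sin v) r t.
Proof.
  apply (continuity_1d_2d_pt_comp sin (fun _ v => v)); [apply continuity_sin|].
  apply continuity_2d_pt_id2.
Qed.

Lemma continuity_2d_pt_r_sin_pow k r t :
  continuity_2d_pt (fun u v => (u * sin v) ^ k) r t.
Proof.
  apply (continuity_1d_2d_pt_comp (fun z => z ^ k) (fun u v => u * sin v)).
  - apply ex_derive_continuity_pt. auto_derive. exact I.
  - apply continuity_2d_pt_mult; [apply continuity_2d_pt_id1 | apply continuity_2d_pt_sin].
Qed.

Lemma continuity_2d_pt_cos_sq r t : continuity_2d_pt (fun _ v => cos v ^ 2) r t.
Proof.
  apply (continuity_1d_2d_pt_comp (fun z => cos z ^ 2) (fun _ v => v)).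
  - apply ex_derive_continuity_pt. auto_derive. exact I.
  - apply continuity_2d_pt_id2.
Qed.

Lemma nondecreasing_of_is_derive (f df : R -> R) a b : a <= b ->
  (forall x, a <= x <= b -> is_derive f x (df x)) -> (forall x, a < x < b -> 0 <= df x) ->
  f a <= f b.
Proof.
  intros [Hab|Hab] Hf Hdf; [|subst; lra].
  destruct (MVT_cor2 f df a b Hab) as [c [E Hc]].
  - intros x Hx. apply is_derive_Reals, Hf, Hx.
  - pose proof (Hdf c Hc). nra.
Qed.

Lemma RInt_zero_on (f : R -> R) a b :
  (forall x, Rmin a b < x < Rmax a b -> f x = 0) -> RInt f a b = 0.
Proof. intros Hf. rewrite (RInt_ext f (fun _ => 0)), RInt_const by exact Hf. apply Rmult_0_r. Qed.

Lemma RInt_scal_minus (f g : R -> R) a b c : ex_RInt f a b -> ex_RInt g a b ->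
  RInt (fun x => c * (f x - g x)) a b = c * (RInt f a b - RInt g a b).
Proof.
  intros Hf Hg. apply is_RInt_unique.
  apply (is_RInt_scal (fun x => f x - g x) a b c).
  apply (is_RInt_minus f g a b); apply (RInt_correct (V := R_CompleteNormedModule)); assumption.
Qed.

Lemma RInt_gt_0 (f : R -> R) a b : a < b ->
  (forall x, a <= x <= b -> continuous f x) -> (forall x, a < x < b -> 0 < f x) ->
  0 < RInt f a b.
Proof.
  intros Hab Hc Hf.
  apply Rle_lt_trans with (RInt (fun _ => 0) a b).
  - right. symmetry. apply RInt_zero_on. reflexivity.
  - apply RInt_lt; auto using continuous_const.
Qed.

Lemma RInt_symmetric (f : R -> R) a : 0 <= a ->
  (forall x, - a <= x <= a -> continuous f x) ->
  RInt f (- a) a = RInt (fun t => f t + f (- t)) 0 a.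
Proof.
  intros Ha Hf.
  assert (Hl : ex_RInt f (- a) 0).
  { apply (ex_RInt_continuous (V := R_CompleteNormedModule)). intros z Hz.
    rewrite Rmin_left, Rmax_right in Hz by lra. apply Hf. lra. }
  assert (Hr : ex_RInt f 0 a).
  { apply (ex_RInt_continuous (V := R_CompleteNormedModule)). intros z Hz.
    rewrite Rmin_left, Rmax_right in Hz by lra. apply Hf. lra. }
  assert (Hrefl : is_RInt (fun t => f (- t)) 0 a (RInt f (- a) 0)).
  { apply (is_RInt_ext (V := R_NormedModule) (fun t => opp (opp (f (- t))))).
    { intros x _. apply opp_opp. }
    rewrite <- (opp_opp (RInt f (- a) 0)).
    apply (is_RInt_comp_opp (V := R_NormedModule) (fun x => opp (f x))).
    apply (is_RInt_opp (V := R_NormedModule)). rewrite Ropp_0.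
    apply (is_RInt_swap (V := R_NormedModule)).
    apply (RInt_correct (V := R_CompleteNormedModule)), Hl. }
  rewrite <- (RInt_Chasles f (- a) 0 a Hl Hr). symmetry. apply is_RInt_unique.
  change (RInt f (- a) 0 + RInt f 0 a) with (plus (RInt f (- a) 0) (RInt f 0 a)).
  rewrite plus_comm. apply (is_RInt_plus (V := R_NormedModule)); [|exact Hrefl].
  apply (RInt_correct (V := R_CompleteNormedModule)), Hr.
Qed.

Lemma pow_lt_compat_l x y k : 0 <= x < y -> (0 < k)%nat -> x ^ k < y ^ k.
Proof.
  intros Hxy Hk. destruct k as [|k]; [lia|]. simpl.
  assert (x ^ k <= y ^ k) by (apply pow_incr; lra).
  assert (0 < y ^ k) by (apply pow_lt; lra).
  assert (0 <= x ^ k) by (apply pow_le; lra). nra.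
Qed.

Lemma Rinv_mult_lt_contravar q1 q2 a1 a2 :
  0 < q1 <= q2 -> 0 < a1 < a2 -> / (q2 * a2) < / (q1 * a1).
Proof.
  intros Hq Ha. apply Rinv_lt_contravar; [apply Rmult_lt_0_compat|]; nra.
Qed.

Lemma is_derive_inverse_increasing (f df g : R -> R) a b s : a < b ->
  (forall x, a <= x <= b -> is_derive f x (df x)) ->
  (forall x y, a <= x -> x < y -> y <= b -> f x < f y) ->
  (forall s, f a <= s <= f b -> a <= g s <= b /\ f (g s) = s) ->
  f a < s < f b -> df (g s) <> 0 ->
  is_derive g s (1 / df (g s)).
Proof.
  intros Hab Hf Hincr Hg Hs Hdf.
  assert (Hinj : forall x y, a <= x <= b -> a <= y <= b -> f x = f y -> x = y).
  { intros x y Hx Hy E. destruct (Rtotal_order x y) as [Hxy|[Hxy|Hxy]]; auto.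
    - pose proof (Hincr x y ltac:(lra) Hxy ltac:(lra)). lra.
    - pose proof (Hincr y x ltac:(lra) Hxy ltac:(lra)). lra. }
  assert (Hgf : forall x, a <= x <= b -> g (f x) = x).
  { intros x Hx. assert (Hfx : f a <= f x <= f b).
    { split; [destruct (Req_dec x a) | destruct (Req_dec x b)]; subst; try lra;
        left; apply Hincr; lra. }
    destruct (Hg _ Hfx) as [Hgx E]. apply Hinj; auto. }
  assert (Hcomp : forall x, f a <= x <= f b -> comp f g x = id x).
  { intros x Hx. apply Hg, Hx. }
  assert (Hgc : continuity_pt g s).
  { apply (continuity_pt_recip_interv f g a b Hab Hincr).
    - intros x Hx Hx'. apply Hcomp; lra.
    - intros x Hx Hx'. apply Hg; lra.
    - intros x Hx. eapply is_derive_continuity_pt, Hf, Hx.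
    - exact Hs. }
  assert (Hgs : g (f a) <= g s <= g (f b)).
  { rewrite !Hgf by lra. apply Hg. lra. }
  assert (Prf : forall x, g (f a) <= x <= g (f b) -> derivable_pt f x).
  { intros x Hx. rewrite !Hgf in Hx by lra. exists (df x). apply is_derive_Reals, Hf, Hx. }
  assert (Hd : derive_pt f (g s) (Prf (g s) Hgs) = df (g s)).
  { apply derive_pt_eq_0, is_derive_Reals, Hf. rewrite !Hgf in Hgs by lra. exact Hgs. }
  apply is_derive_Reals. rewrite <- Hd.
  apply (derivable_pt_lim_recip_interv f g (f a) (f b) s Prf Hgc); auto.
  - apply Hincr; lra.
  - rewrite Hd. exact Hdf.
Qed.

Section Oval.

Variable n : nat.
Hypothesis n_pos : (0 < n)%nat.

Let N := INR n.

Lemma N_pos : 0 < N.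
Proof. apply lt_0_INR. exact n_pos. Qed.

Lemma pow_pred_n (y : R) : y ^ n = y * y ^ pred n.
Proof. destruct n as [|m]; [lia | reflexivity]. Qed.

Definition kappa := 2 / ((N + 1) * (N + 2)).
Definition P (y : R) := y ^ n * (1 - y ^ 2).
Definition A (y : R) := (N + 2) * y ^ 2 - N.
Definition dP (y : R) := - y ^ pred n * A y.
Definition y_crit := sqrt (N / (N + 2)).
Definition P_max := P y_crit.

Lemma kappa_pos : 0 < kappa.
Proof. pose proof N_pos. unfold kappa. apply Rdiv_lt_0_compat; nra. Qed.

Lemma y_crit_sq : y_crit ^ 2 = N / (N + 2).
Proof.
  pose proof N_pos. unfold y_crit. rewrite <- Rsqr_pow2. apply Rsqr_sqrt.
  apply Rlt_le, Rdiv_lt_0_compat; lra.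
Qed.

Lemma y_crit_pos : 0 < y_crit.
Proof. pose proof N_pos. apply sqrt_lt_R0, Rdiv_lt_0_compat; lra. Qed.

Lemma y_crit_lt_1 : y_crit < 1.
Proof.
  pose proof y_crit_pos. pose proof y_crit_sq. pose proof N_pos.
  assert (N / (N + 2) < 1).
  { apply (Rmult_lt_reg_r (N + 2)); [lra|]. unfold Rdiv. rewrite Rmult_assoc, Rinv_l; lra. }
  assert (y_crit * y_crit < 1) by (rewrite <- Rsqr_pow2 in *; unfold Rsqr in *; lra). nra.
Qed.

Lemma is_derive_P y : is_derive P y (dP y).
Proof.
  unfold P, dP, A. auto_derive; auto.
  replace (S n) with (S (S (pred n))) by lia. rewrite (pow_pred_n y). fold N. simpl. ring.
Qed.

Lemma A_pos y : y_crit < y -> 0 < A y.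
Proof.
  intros Hy. pose proof y_crit_pos. pose proof N_pos. unfold A.
  assert (N = (N + 2) * y_crit ^ 2) by (rewrite y_crit_sq; field; lra).
  assert (y_crit ^ 2 < y ^ 2) by (rewrite <- !Rsqr_pow2; apply Rsqr_incrst_1; lra). nra.
Qed.

Lemma dP_neg y : y_crit < y -> dP y < 0.
Proof.
  intros Hy. pose proof (A_pos y Hy). pose proof y_crit_pos.
  assert (0 < y ^ pred n) by (apply pow_lt; lra). unfold dP. nra.
Qed.

Lemma P_decreasing a b : y_crit <= a -> a < b -> P b < P a.
Proof.
  intros Ha Hab. destruct (MVT_cor2 P dP a b Hab) as [c [E Hc]].
  - intros x _. apply is_derive_Reals, is_derive_P.
  - assert (dP c < 0) by (apply dP_neg; lra). nra.
Qed.

Lemma P_max_bounds : 0 < P_max < 1.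
Proof.
  pose proof y_crit_pos. pose proof y_crit_lt_1.
  assert (0 < y_crit ^ n) by (apply pow_lt; lra).
  assert (y_crit ^ n <= 1) by (rewrite <- (pow1 n); apply pow_incr; lra).
  assert (0 < y_crit ^ 2 < 1) by (simpl; split; nra).
  unfold P_max, P. split; [apply Rmult_lt_0_compat|]; nra.
Qed.

Lemma P_2_lt : P 2 < -1.
Proof.
  unfold P. assert (1 <= 2 ^ n) by (rewrite <- (pow1 n); apply pow_incr; lra). simpl. nra.
Qed.

Lemma P_1 : P 1 = 0.
Proof. unfold P. simpl. ring. Qed.

(* The branch of the inverse of [P] through [y = 1], on [[P 2, P_max]]; its value
   outside that interval is unspecified. *)
Definition Y (s : R) : R := epsilon (inhabits 0) (fun y => y_crit <= y <= 2 /\ P y = s).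

Definition in_dom (s : R) := P 2 < s < P_max.

Lemma Y_spec s : P 2 <= s <= P_max -> y_crit <= Y s <= 2 /\ P (Y s) = s.
Proof.
  intros Hs. unfold Y. apply epsilon_spec. pose proof y_crit_lt_1.
  assert (Hc : continuity P) by (intro; eapply is_derive_continuity_pt, is_derive_P).
  assert (P 2 < P y_crit) by (apply P_decreasing; lra).
  destruct (IVT_gen P y_crit 2 s Hc) as [y [Hy E]].
  - rewrite Rmin_right, Rmax_left by lra. exact Hs.
  - exists y. rewrite Rmin_left, Rmax_right in Hy by lra. auto.
Qed.

Lemma Y_P y : y_crit <= y <= 2 -> Y (P y) = y.
Proof.
  intros Hy. pose proof y_crit_lt_1.
  assert (Hs : P 2 <= P y <= P_max).
  { unfold P_max. split; [destruct (Req_dec y 2) | destruct (Req_dec y y_crit)];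
      subst; try lra; left; apply P_decreasing; lra. }
  destruct (Y_spec _ Hs) as [HY E].
  destruct (Rtotal_order (Y (P y)) y) as [Hlt|[Heq|Hgt]]; auto.
  - pose proof (P_decreasing _ _ (proj1 HY) Hlt). lra.
  - pose proof (P_decreasing _ _ (proj1 Hy) Hgt). lra.
Qed.

Lemma Y_0 : Y 0 = 1.
Proof. rewrite <- P_1. apply Y_P. pose proof y_crit_lt_1. lra. Qed.

Lemma Y_gt_crit s : P 2 <= s < P_max -> y_crit < Y s.
Proof.
  intros Hs. destruct (Y_spec s) as [[[Hlt|Heq] _] E]; [lra | exact Hlt |].
  rewrite <- Heq in E. unfold P_max in Hs. lra.
Qed.

Lemma Y_pos s : P 2 <= s <= P_max -> 0 < Y s.
Proof. intros Hs. pose proof y_crit_pos. destruct (Y_spec s Hs). lra. Qed.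

Lemma Y_lt_1 s : 0 < s <= P_max -> Y s < 1.
Proof.
  intros Hs. pose proof P_2_lt. pose proof y_crit_lt_1.
  destruct (Y_spec s) as [HY E]; [lra|].
  destruct (Rlt_or_le (Y s) 1) as [Hlt|[Hgt|Heq]]; auto.
  - pose proof (P_decreasing 1 (Y s) ltac:(lra) Hgt) as HP. rewrite P_1 in HP. lra.
  - rewrite <- Heq, P_1 in E. lra.
Qed.

Lemma Y_gt_1 s : P 2 <= s < 0 -> 1 < Y s.
Proof.
  intros Hs. pose proof P_max_bounds.
  destruct (Y_spec s) as [HY E]; [lra|].
  destruct (Rlt_or_le 1 (Y s)) as [Hgt|[Hlt|Heq]]; auto.
  - pose proof (P_decreasing (Y s) 1 ltac:(lra) Hlt) as HP. rewrite P_1 in HP. lra.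
  - rewrite Heq, P_1 in E. lra.
Qed.

Lemma Y_in_dom s : in_dom s -> y_crit < Y s /\ 0 < A (Y s) /\ 0 < Y s ^ pred n.
Proof.
  intros Hs. assert (Hy : y_crit < Y s) by (apply Y_gt_crit; unfold in_dom in Hs; lra).
  pose proof y_crit_pos. split; [|split]; [exact Hy | apply A_pos, Hy | apply pow_lt; lra].
Qed.

Definition dY (s : R) := - / (Y s ^ pred n * A (Y s)).

Lemma dY_eq s : in_dom s -> dY s = 1 / dP (Y s).
Proof.
  intros Hs. destruct (Y_in_dom s Hs) as [_ [HA Hq]].
  unfold dY, dP. field. split; lra.
Qed.

Lemma is_derive_Y s : in_dom s -> is_derive Y s (dY s).
Proof.
  intros Hs. pose proof y_crit_lt_1. pose proof P_2_lt. pose proof P_max_bounds.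
  unfold in_dom in Hs. rewrite dY_eq by exact Hs.
  pose proof (dP_neg _ (Y_gt_crit s ltac:(lra))).
  (* [Y] is [t |-> G (- t)], where [G] inverts the increasing function [- P]. *)
  assert (HG : is_derive (fun t => Y (- t)) (- s) (1 / - dP (Y (- - s)))).
  { apply (is_derive_inverse_increasing (fun y => - P y) (fun y => - dP y)
      (fun t => Y (- t)) y_crit 2 (- s)); try lra.
    - intros x _. apply (is_derive_opp P), is_derive_P.
    - intros x y Hx Hxy _. pose proof (P_decreasing x y Hx Hxy). lra.
    - intros t Ht. fold P_max in Ht. destruct (Y_spec (- t)) as [HY E]; [lra|].
      rewrite E. split; [exact HY | ring].
    - fold P_max. lra.
    - rewrite Ropp_involutive. lra. }
  rewrite Ropp_involutive in HG.
  apply (is_derive_ext (fun t => Y (- - t))); [intro; rewrite Ropp_involutive; reflexivity|].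
  replace (1 / dP (Y s)) with ((-1) * (1 / - dP (Y s))) by (field; lra).
  apply (is_derive_comp (fun t => Y (- t)) Ropp s); [exact HG|].
  auto_derive; auto; ring.
Qed.

Definition Phi (s : R) := 2 * Y s / A (Y s).
Definition dPhi (s : R) :=
  2 / (Y s ^ pred n * A (Y s) ^ 2) + 4 * N / (Y s ^ pred n * A (Y s) ^ 3).

Lemma is_derive_Phi s : in_dom s -> is_derive Phi s (dPhi s).
Proof.
  intros Hs. destruct (Y_in_dom s Hs) as [HY [HA Hq]].
  assert (E : dPhi s = dY s * (-2 * ((N + 2) * Y s ^ 2 + N) / A (Y s) ^ 2)).
  { unfold dPhi, dY, A in *. field. lra. }
  rewrite E. apply (is_derive_comp (fun y => 2 * y / A y) Y s); [|apply is_derive_Y, Hs].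
  unfold A in *. auto_derive; [lra|]. field. lra.
Qed.

Lemma continuity_pt_Y s : in_dom s -> continuity_pt Y s.
Proof. intros Hs. eapply is_derive_continuity_pt, is_derive_Y, Hs. Qed.

Lemma continuity_pt_Phi s : in_dom s -> continuity_pt Phi s.
Proof. intros Hs. eapply is_derive_continuity_pt, is_derive_Phi, Hs. Qed.

Lemma continuity_pt_dY s : in_dom s -> continuity_pt dY s.
Proof.
  intros Hs. destruct (Y_in_dom s Hs) as [HY [HA Hq]].
  apply (continuity_pt_comp Y (fun y => - / (y ^ pred n * A y))); [apply continuity_pt_Y, Hs|].
  apply ex_derive_continuity_pt. unfold A in *. auto_derive. nra.
Qed.

Lemma continuity_pt_dPhi s : in_dom s -> continuity_pt dPhi s.
Proof.
  intros Hs. destruct (Y_in_dom s Hs) as [HY [HA Hq]].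
  apply (continuity_pt_comp Y
    (fun y => 2 / (y ^ pred n * A y ^ 2) + 4 * N / (y ^ pred n * A y ^ 3)));
    [apply continuity_pt_Y, Hs|].
  apply ex_derive_continuity_pt. unfold A in *.
  assert (0 < Y s ^ pred n * ((N + 2) * Y s ^ 2 - N) ^ 2) by (apply Rmult_lt_0_compat, pow_lt; lra).
  assert (0 < Y s ^ pred n * ((N + 2) * Y s ^ 2 - N) ^ 3) by (apply Rmult_lt_0_compat, pow_lt; lra).
  auto_derive. simpl in *. repeat split; lra.
Qed.

Lemma dY_neg s : in_dom s -> dY s < 0.
Proof.
  intros Hs. destruct (Y_in_dom s Hs) as [HY [HA Hq]]. unfold dY.
  assert (0 < / (Y s ^ pred n * A (Y s))) by (apply Rinv_0_lt_compat; nra). lra.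
Qed.

Lemma dPhi_pos s : in_dom s -> 0 < dPhi s.
Proof.
  intros Hs. destruct (Y_in_dom s Hs) as [HY [HA Hq]]. pose proof N_pos. unfold dPhi.
  assert (0 < A (Y s) ^ 2) by (apply pow_lt; lra).
  assert (0 < A (Y s) ^ 3) by (apply pow_lt; lra).
  assert (0 < 2 / (Y s ^ pred n * A (Y s) ^ 2)) by (apply Rdiv_lt_0_compat; nra).
  assert (0 < 4 * N / (Y s ^ pred n * A (Y s) ^ 3)) by (apply Rdiv_lt_0_compat; nra).
  lra.
Qed.

Lemma Y_opp_facts s : 0 < s < P_max ->
  0 < Y s ^ pred n <= Y (- s) ^ pred n /\ 0 < A (Y s) < A (Y (- s)).
Proof.
  intros Hs. pose proof P_2_lt. pose proof P_max_bounds. pose proof N_pos.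
  destruct (Y_in_dom s ltac:(unfold in_dom; lra)) as [HY [HA Hq]].
  pose proof (Y_lt_1 s ltac:(lra)). pose proof (Y_gt_1 (- s) ltac:(lra)).
  pose proof y_crit_pos.
  split; [split; [exact Hq | apply pow_incr; lra]|split; [exact HA|]].
  unfold A. assert (Y s ^ 2 < Y (- s) ^ 2) by (rewrite <- !Rsqr_pow2; apply Rsqr_incrst_1; lra).
  nra.
Qed.

Lemma dY_lt_dY_opp s : 0 < s < P_max -> dY s < dY (- s).
Proof.
  intros Hs. destruct (Y_opp_facts s Hs) as [Hq HA]. unfold dY.
  pose proof (Rinv_mult_lt_contravar _ _ _ _ Hq HA). lra.
Qed.

Lemma dPhi_opp_lt_dPhi s : 0 < s < P_max -> dPhi (- s) < dPhi s.
Proof.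
  intros Hs. pose proof N_pos. destruct (Y_opp_facts s Hs) as [Hq HA]. unfold dPhi, Rdiv.
  assert (HA2 : 0 < A (Y s) ^ 2 < A (Y (- s)) ^ 2).
  { split; [apply pow_lt|rewrite <- !Rsqr_pow2; apply Rsqr_incrst_1]; lra. }
  assert (HA3 : 0 < A (Y s) ^ 3 < A (Y (- s)) ^ 3).
  { split; [apply pow_lt; lra|].
    rewrite <- !(tech_pow_Rmult _ 2). nra. }
  pose proof (Rinv_mult_lt_contravar _ _ _ _ Hq HA2).
  pose proof (Rinv_mult_lt_contravar _ _ _ _ Hq HA3). nra.
Qed.

Definition r_max := c_n n * y_crit.

Lemma c_n_pos : 0 < c_n n.
Proof. apply exp_pos. Qed.

Lemma c_n_pow : c_n n ^ n = N + 1.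
Proof.
  pose proof N_pos. unfold c_n. rewrite <- Rpower_pow by apply exp_pos.
  rewrite Rpower_mult. fold N. replace (1 / N * N) with 1 by (field; lra).
  apply Rpower_1. lra.
Qed.

Lemma d_n_eq : d_n n = N * c_n n ^ 2 / (2 * (N + 2)).
Proof.
  pose proof N_pos. unfold d_n, c_n. fold N.
  rewrite <- Rpower_pow by apply exp_pos. rewrite Rpower_mult.
  replace (1 / N * INR 2) with (2 / N) by (simpl; field; lra). reflexivity.
Qed.

Lemma r_max_pos : 0 < r_max.
Proof. pose proof c_n_pos. pose proof y_crit_pos. unfold r_max. nra. Qed.

Lemma r_max_sq : r_max ^ 2 = 2 * d_n n.
Proof.
  pose proof N_pos. rewrite d_n_eq. unfold r_max. rewrite Rpow_mult_distr, y_crit_sq.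
  field. lra.
Qed.

Lemma kappa_r_max : kappa * r_max ^ n = P_max.
Proof.
  pose proof N_pos. unfold r_max, P_max, P, kappa.
  rewrite Rpow_mult_distr, c_n_pow, y_crit_sq. field. lra.
Qed.

Definition sigma (r t : R) := kappa * (r * sin t) ^ n.
Definition dsigma (r t : R) := kappa * (N * (r * sin t) ^ pred n * sin t).

Lemma Rabs_kappa_pow_lt x : Rabs x < r_max -> Rabs (kappa * x ^ n) < P_max.
Proof.
  intros Hx. pose proof kappa_pos as Hk. rewrite <- kappa_r_max, Rabs_mult, <- RPow_abs.
  rewrite (Rabs_pos_eq kappa) by lra. apply Rmult_lt_compat_l; [exact Hk|].
  apply pow_lt_compat_l; [split; [apply Rabs_pos | exact Hx] | exact n_pos].
Qed.

Lemma Rabs_r_sin_lt r t : Rabs r < r_max -> Rabs (r * sin t) < r_max.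
Proof.
  intros Hr. rewrite Rabs_mult. pose proof (Rabs_pos r). pose proof (Rabs_pos (sin t)).
  assert (Rabs (sin t) <= 1) by (apply Rabs_le, SIN_bound). nra.
Qed.

Lemma in_dom_sigma r t : Rabs r < r_max -> in_dom (sigma r t).
Proof.
  intros Hr. pose proof P_2_lt. pose proof P_max_bounds.
  pose proof (Rabs_kappa_pow_lt _ (Rabs_r_sin_lt r t Hr)) as Hs.
  apply Rabs_def2 in Hs. unfold in_dom, sigma. lra.
Qed.

Lemma is_derive_sigma r t : is_derive (fun r => sigma r t) r (dsigma r t).
Proof. unfold sigma, dsigma. auto_derive; auto. fold N. ring. Qed.

Lemma P_Y_sigma r t : Rabs r < r_max -> P (Y (sigma r t)) = sigma r t.
Proof.
  intros Hr. pose proof (in_dom_sigma r t Hr) as Hs. unfold in_dom in Hs. apply Y_spec. lra.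
Qed.

Lemma Y_sigma_pos r t : Rabs r < r_max -> 0 < Y (sigma r t).
Proof.
  intros Hr. pose proof (in_dom_sigma r t Hr) as Hs. unfold in_dom in Hs. apply Y_pos. lra.
Qed.

(* The oval [W = r^2 / 2] is parametrized by [t |-> u_param r t]; the point is that
   [kappa x^n = Y^n (1 - Y^2)] turns [W (x / Y)] into [x^2 / 2]. *)
Definition u_param (r t : R) := r * sin t / Y (sigma r t).

Lemma u_param_pow r t : Rabs r < r_max ->
  u_param r t ^ n = (1 - Y (sigma r t) ^ 2) / kappa.
Proof.
  intros Hr. pose proof (Y_sigma_pos r t Hr). pose proof (P_Y_sigma r t Hr) as E.
  pose proof kappa_pos. unfold u_param, sigma, P in *.
  assert (0 < Y (kappa * (r * sin t) ^ n) ^ n) by (apply pow_lt; lra).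
  unfold Rdiv at 1. rewrite Rpow_mult_distr, pow_inv.
  set (y := Y (kappa * (r * sin t) ^ n)) in *.
  replace ((r * sin t) ^ n) with (y ^ n * (1 - y ^ 2) / kappa) by (rewrite E; field; lra).
  field. lra.
Qed.

Lemma W_u_param r t : Rabs r < r_max -> W n (u_param r t) = (r * sin t) ^ 2 / 2.
Proof.
  intros Hr. pose proof (Y_sigma_pos r t Hr). pose proof N_pos.
  unfold W. rewrite pow_add, u_param_pow by exact Hr. fold N.
  unfold u_param, kappa. field. lra.
Qed.

Lemma Rabs_u_param_lt r t : Rabs r < r_max -> Rabs (u_param r t) < c_n n.
Proof.
  intros Hr. pose proof (Y_sigma_pos r t Hr). pose proof (Rabs_r_sin_lt r t Hr) as Hx.
  pose proof (proj1 (Y_in_dom _ (in_dom_sigma r t Hr))). pose proof y_crit_pos.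
  pose proof c_n_pos. unfold u_param, Rdiv.
  rewrite Rabs_mult, Rabs_inv, (Rabs_pos_eq (Y _)) by lra.
  unfold r_max in Hx. apply (Rmult_lt_reg_r (Y (sigma r t))); [lra|].
  rewrite Rmult_assoc, Rinv_l by lra. nra.
Qed.

Lemma is_derive_u_param r t : Rabs r < r_max ->
  is_derive (u_param r) t (r * cos t * Phi (sigma r t)).
Proof.
  intros Hr. pose proof (in_dom_sigma r t Hr) as Hs.
  destruct (Y_in_dom _ Hs) as [HY [HA Hq]]. pose proof (Y_sigma_pos r t Hr).
  pose proof (P_Y_sigma r t Hr) as E.
  unfold u_param, sigma. auto_derive.
  { unfold sigma in *. repeat split; try lra. eexists; apply is_derive_Y, Hs. }
  fold (sigma r t).
  replace (Derive (fun x : R => Y x) (sigma r t)) with (dY (sigma r t))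
    by (symmetry; apply is_derive_unique, is_derive_Y, Hs).
  unfold sigma at 2 in E. unfold Phi, dY, P, A in *.
  set (y := Y (sigma r t)) in *. set (x := r * sin t) in *. fold N.
  rewrite (pow_pred_n y), (pow_pred_n x) in E.
  set (q := y ^ pred n) in *. set (xm := x ^ pred n) in *.
  transitivity (r * cos t / y
    + (kappa * (x * xm)) * (r * cos t * N / (q * ((N + 2) * y ^ 2 - N))) / (y * y)).
  - field. repeat split; lra.
  - rewrite <- E. field. repeat split; lra.
Qed.

Lemma is_derive_W u : is_derive (W n) u (u * (1 - u ^ n / (N + 1))).
Proof.
  pose proof N_pos. unfold W. auto_derive; [lra|].
  replace (pred (n + 2)) with (S n) by lia. rewrite plus_INR. fold N. simpl. field. lra.
Qed.

Lemma W_slope_factor_nonneg u : Rabs u <= c_n n -> 0 <= 1 - u ^ n / (N + 1).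
Proof.
  intros Hu. pose proof N_pos.
  assert (u ^ n <= N + 1).
  { rewrite <- c_n_pow. apply Rle_trans with (Rabs (u ^ n)); [apply Rle_abs|].
    rewrite <- RPow_abs. apply pow_incr. split; [apply Rabs_pos | exact Hu]. }
  assert (u ^ n / (N + 1) <= 1).
  { apply (Rmult_le_reg_r (N + 1)); [lra|]. unfold Rdiv. rewrite Rmult_assoc, Rinv_l; lra. }
  lra.
Qed.

Lemma W_increasing a b : 0 <= a -> a <= b -> b <= c_n n -> W n a <= W n b.
Proof.
  intros Ha Hab Hb.
  apply (nondecreasing_of_is_derive (W n) (fun u => u * (1 - u ^ n / (N + 1))) a b Hab).
  - intros x _. apply is_derive_W.
  - intros x Hx. apply Rmult_le_pos; [lra|].
    apply W_slope_factor_nonneg. rewrite Rabs_pos_eq; lra.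
Qed.

Lemma W_decreasing a b : - c_n n <= a -> a <= b -> b <= 0 -> W n b <= W n a.
Proof.
  intros Ha Hab Hb. cut (- W n a <= - W n b); [lra|].
  apply (nondecreasing_of_is_derive (fun u => - W n u)
    (fun u => - (u * (1 - u ^ n / (N + 1)))) a b Hab).
  - intros x _. apply (is_derive_opp (W n)), is_derive_W.
  - intros x Hx. assert (0 <= 1 - x ^ n / (N + 1)).
    { apply W_slope_factor_nonneg. rewrite Rabs_left by lra. lra. }
    nra.
Qed.

Definition branch (k : nat) (h u : R) := u ^ k * sqrt (2 * (h - W n u)).

Lemma oval_int_branch k h : oval_int n k h = 2 * RInt (branch k h) (- c_n n) (c_n n).
Proof.
  unfold oval_int. f_equal. apply RInt_ext. intros x _. unfold oval_integrand, branch.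
  destruct (Rlt_dec (W n x) h); [reflexivity|].
  rewrite sqrt_neg_0 by lra. rewrite Rmult_0_r. reflexivity.
Qed.

Lemma continuous_branch k h u : continuous (branch k h) u.
Proof.
  unfold branch. apply (continuous_mult (fun u => u ^ k)).
  - apply continuity_pt_filterlim, ex_derive_continuity_pt. auto_derive. exact I.
  - apply continuous_sqrt_comp, continuity_pt_filterlim, ex_derive_continuity_pt.
    unfold W. auto_derive. exact I.
Qed.

Lemma ex_RInt_branch k h a b : ex_RInt (branch k h) a b.
Proof.
  apply (ex_RInt_continuous (V := R_CompleteNormedModule)). intros x _. apply continuous_branch.
Qed.

Lemma RInt_branch_turning k h um up : - c_n n <= um <= 0 -> 0 <= up <= c_n n ->
  W n um = h -> W n up = h ->
  RInt (branch k h) (- c_n n) (c_n n) = RInt (branch k h) um up.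
Proof.
  intros Hum Hup Em Ep.
  assert (Hzero : forall x, h <= W n x -> branch k h x = 0).
  { intros x Hx. unfold branch. rewrite sqrt_neg_0 by lra. apply Rmult_0_r. }
  rewrite <- (RInt_Chasles (branch k h) (- c_n n) um (c_n n)),
    <- (RInt_Chasles (branch k h) um up (c_n n))
    by apply ex_RInt_branch.
  rewrite (RInt_zero_on _ (- c_n n) um), (RInt_zero_on _ up (c_n n)).
  - change (0 + (RInt (branch k h) um up + 0) = RInt (branch k h) um up). ring.
  - intros x Hx. rewrite Rmin_left, Rmax_right in Hx by lra.
    apply Hzero. rewrite <- Ep. apply W_increasing; lra.
  - intros x Hx. rewrite Rmin_left, Rmax_right in Hx by lra.
    apply Hzero. rewrite <- Em. apply W_decreasing; lra.
Qed.

Lemma continuous_sigma_t r t : continuous (sigma r) t.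
Proof.
  apply continuity_pt_filterlim, ex_derive_continuity_pt. unfold sigma. auto_derive. exact I.
Qed.

Lemma RInt_branch_u_param k h r : 0 < r < r_max -> r ^ 2 = 2 * h ->
  RInt (branch k h) (- c_n n) (c_n n) =
  RInt (fun t => r * cos t * Phi (sigma r t) * (u_param r t ^ k * (r * cos t)))
    (- (PI / 2)) (PI / 2).
Proof.
  intros Hr Hh. assert (Hr' : Rabs r < r_max) by (rewrite Rabs_pos_eq; lra).
  pose proof PI2_RGT_0. pose proof (Y_sigma_pos r (PI / 2) Hr').
  pose proof (Y_sigma_pos r (- (PI / 2)) Hr').
  assert (Hu : forall t, - c_n n < u_param r t < c_n n).
  { intro t. pose proof (Rabs_def2 _ _ (Rabs_u_param_lt r t Hr')). lra. }
  assert (Hp : 0 < u_param r (PI / 2)).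
  { unfold u_param. rewrite sin_PI2. apply Rdiv_lt_0_compat; lra. }
  assert (Hm : u_param r (- (PI / 2)) < 0).
  { unfold u_param. rewrite sin_neg, sin_PI2. unfold Rdiv.
    assert (0 < / Y (sigma r (- (PI / 2)))) by (apply Rinv_0_lt_compat; lra). nra. }
  rewrite (RInt_branch_turning k h (u_param r (- (PI / 2))) (u_param r (PI / 2))).
  2: specialize (Hu (- (PI / 2))); lra.
  2: specialize (Hu (PI / 2)); lra.
  2: rewrite W_u_param, sin_neg, sin_PI2 by exact Hr'; lra.
  2: rewrite W_u_param, sin_PI2 by exact Hr'; lra.
  rewrite <- (RInt_comp (branch k h) (u_param r) (fun t => r * cos t * Phi (sigma r t))).
  - apply RInt_ext. intros x Hx. rewrite Rmin_left, Rmax_right in Hx by lra.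
    change (scal ?a ?b) with (a * b). unfold branch. rewrite W_u_param by exact Hr'.
    pose proof (cos_gt_0 x ltac:(lra) ltac:(lra)). pose proof (sin2_cos2 x).
    replace (2 * (h - (r * sin x) ^ 2 / 2)) with ((r * cos x) ^ 2)
      by (unfold Rsqr in *; simpl in *; nra).
    rewrite sqrt_pow2 by (apply Rmult_le_pos; lra). reflexivity.
  - intros x _. apply continuous_branch.
  - intros x _. split; [apply is_derive_u_param, Hr'|].
    apply (continuous_mult (fun t => r * cos t)).
    + apply continuity_pt_filterlim, ex_derive_continuity_pt. auto_derive. exact I.
    + apply (continuous_comp (sigma r) Phi); [apply continuous_sigma_t|].
      apply continuity_pt_filterlim, continuity_pt_Phi, in_dom_sigma, Hr'.
Qed.

Definition J (F : R -> R) (r : R) :=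
  RInt (fun t => cos t ^ 2 * F (sigma r t)) (- (PI / 2)) (PI / 2).
Definition dJ (G : R -> R) (r : R) :=
  RInt (fun t => cos t ^ 2 * (G (sigma r t) * dsigma r t)) (- (PI / 2)) (PI / 2).

Lemma continuity_2d_pt_sigma r t : continuity_2d_pt sigma r t.
Proof.
  apply (continuity_2d_pt_mult (fun _ _ => kappa)); [apply continuity_2d_pt_const|].
  apply continuity_2d_pt_r_sin_pow.
Qed.

Lemma continuity_2d_pt_dsigma r t : continuity_2d_pt dsigma r t.
Proof.
  apply (continuity_2d_pt_mult (fun _ _ => kappa)); [apply continuity_2d_pt_const|].
  apply continuity_2d_pt_mult; [|apply continuity_2d_pt_sin].
  apply (continuity_2d_pt_mult (fun _ _ => N)); [apply continuity_2d_pt_const|].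
  apply continuity_2d_pt_r_sin_pow.
Qed.

Lemma continuity_2d_pt_F_sigma (F : R -> R) r t : Rabs r < r_max ->
  (forall s, in_dom s -> continuity_pt F s) ->
  continuity_2d_pt (fun u v => F (sigma u v)) r t.
Proof.
  intros Hr HF. apply (continuity_1d_2d_pt_comp F sigma); [|apply continuity_2d_pt_sigma].
  apply HF, in_dom_sigma, Hr.
Qed.

Lemma continuity_2d_pt_J_integrand (F : R -> R) r t : Rabs r < r_max ->
  (forall s, in_dom s -> continuity_pt F s) ->
  continuity_2d_pt (fun u v => cos v ^ 2 * F (sigma u v)) r t.
Proof.
  intros Hr HF. apply continuity_2d_pt_mult; [apply continuity_2d_pt_cos_sq|].
  apply continuity_2d_pt_F_sigma; assumption.
Qed.

Lemma continuity_2d_pt_dJ_integrand (G : R -> R) r t : Rabs r < r_max ->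
  (forall s, in_dom s -> continuity_pt G s) ->
  continuity_2d_pt (fun u v => cos v ^ 2 * (G (sigma u v) * dsigma u v)) r t.
Proof.
  intros Hr HG. apply continuity_2d_pt_mult; [apply continuity_2d_pt_cos_sq|].
  apply continuity_2d_pt_mult; [|apply continuity_2d_pt_dsigma].
  apply continuity_2d_pt_F_sigma; assumption.
Qed.

Lemma ex_RInt_J_integrand (F : R -> R) r a b : Rabs r < r_max ->
  (forall s, in_dom s -> continuity_pt F s) ->
  ex_RInt (fun t => cos t ^ 2 * F (sigma r t)) a b.
Proof.
  intros Hr HF. apply (ex_RInt_continuous (V := R_CompleteNormedModule)). intros t _.
  apply (continuity_2d_pt_continuous_r (fun u v => cos v ^ 2 * F (sigma u v))).
  apply continuity_2d_pt_J_integrand; assumption.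
Qed.

Lemma B0_eq h r : 0 < r < r_max -> r ^ 2 = 2 * h -> B0 n h = 2 * (r ^ 2 * J Phi r).
Proof.
  intros Hr Hh. assert (Hr' : Rabs r < r_max) by (rewrite Rabs_pos_eq; lra).
  unfold B0. rewrite oval_int_branch, (RInt_branch_u_param 0 h r Hr Hh). f_equal.
  unfold J. rewrite <- (RInt_scal (V := R_CompleteNormedModule)).
  - apply RInt_ext. intros x _. change (scal ?a ?b) with (a * b). simpl. ring.
  - apply ex_RInt_J_integrand; [exact Hr' | apply continuity_pt_Phi].
Qed.

Lemma B_integrand_eq r t : Rabs r < r_max ->
  r * cos t * Phi (sigma r t) * (u_param r t ^ n * (r * cos t)) =
  (N + 1) * r ^ 2 * (cos t ^ 2 * Phi (sigma r t) - cos t ^ 2 * Y (sigma r t)).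
Proof.
  intros Hr. rewrite u_param_pow by exact Hr.
  destruct (Y_in_dom _ (in_dom_sigma r t Hr)) as [_ [HA _]].
  pose proof N_pos. unfold Phi, kappa, A in *. field. lra.
Qed.

Lemma B_eq h r : 0 < r < r_max -> r ^ 2 = 2 * h ->
  B n h = 2 * ((N + 1) * r ^ 2 * (J Phi r - J Y r)).
Proof.
  intros Hr Hh. assert (Hr' : Rabs r < r_max) by (rewrite Rabs_pos_eq; lra).
  unfold B. rewrite oval_int_branch, (RInt_branch_u_param n h r Hr Hh). f_equal.
  unfold J. rewrite <- RInt_scal_minus.
  - apply RInt_ext. intros t _. apply B_integrand_eq, Hr'.
  - apply ex_RInt_J_integrand; [exact Hr' | apply continuity_pt_Phi].
  - apply ex_RInt_J_integrand; [exact Hr' | apply continuity_pt_Y].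
Qed.

Lemma J_pos (F : R -> R) r : Rabs r < r_max ->
  (forall s, in_dom s -> continuity_pt F s) -> (forall s, in_dom s -> 0 < F s) ->
  0 < J F r.
Proof.
  intros Hr HFc HF. pose proof PI2_RGT_0. apply RInt_gt_0; [lra| |].
  - intros t _. apply (continuity_2d_pt_continuous_r (fun u v => cos v ^ 2 * F (sigma u v))).
    apply continuity_2d_pt_J_integrand; assumption.
  - intros t Ht. pose proof (cos_gt_0 t ltac:(lra) ltac:(lra)).
    apply Rmult_lt_0_compat; [apply pow_lt; lra | apply HF, in_dom_sigma, Hr].
Qed.

Lemma is_derive_J (F dF : R -> R) r : Rabs r < r_max ->
  (forall s, in_dom s -> is_derive F s (dF s)) -> (forall s, in_dom s -> continuity_pt dF s) ->
  is_derive (J F) r (dJ dF r).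
Proof.
  intros Hr HF HdF.
  assert (HFc : forall s, in_dom s -> continuity_pt F s)
    by (intros s Hs; eapply is_derive_continuity_pt, HF, Hs).
  assert (Hpartial : forall u t, Rabs u < r_max ->
    is_derive (fun z => cos t ^ 2 * F (sigma z t)) u (cos t ^ 2 * (dF (sigma u t) * dsigma u t))).
  { intros u t Hu. apply (is_derive_scal (fun z => F (sigma z t))). rewrite Rmult_comm.
    apply (is_derive_comp F (fun z => sigma z t)); [apply HF, in_dom_sigma, Hu|].
    apply is_derive_sigma. }
  assert (He : 0 < r_max - Rabs r) by lra.
  assert (Hball : forall u : R, ball r (mkposreal _ He) u -> Rabs u < r_max).
  { intros u Hu. change (Rabs (u - r) < r_max - Rabs r) in Hu.
    pose proof (Rabs_triang (u - r) r) as Htri. replace (u - r + r) with u in Htri by ring.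
    lra. }
  unfold dJ. erewrite RInt_ext.
  2: { intros t _. symmetry. apply is_derive_unique, Hpartial, Hr. }
  apply (is_derive_RInt_param (fun u t => cos t ^ 2 * F (sigma u t))).
  - exists (mkposreal _ He). intros u Hu t _. eexists. apply Hpartial, Hball, Hu.
  - intros t _.
    apply (continuity_2d_pt_ext_loc (fun u v => cos v ^ 2 * (dF (sigma u v) * dsigma u v))).
    + exists (mkposreal _ He). intros u v Hu _. symmetry.
      apply is_derive_unique, Hpartial, Hball, Hu.
    + apply continuity_2d_pt_dJ_integrand; assumption.
  - exists (mkposreal _ He). intros u Hu. apply ex_RInt_J_integrand; [apply Hball, Hu | exact HFc].
Qed.

Lemma dJ_integrand_pair (G : R -> R) r t :
  let x := r * sin t in
  let D := fun t => cos t ^ 2 * (G (sigma r t) * dsigma r t) in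
  D t + D (- t) = cos t ^ 2 * kappa * N * sin t * x ^ pred n *
    (if Nat.even n then 2 * G (kappa * x ^ n)
     else G (kappa * x ^ n) - G (- (kappa * x ^ n))).
Proof.
  intros x D. unfold D, sigma, dsigma. rewrite cos_neg, sin_neg.
  replace (r * - sin t) with ((-1) * x) by (unfold x; ring). fold x.
  rewrite !Rpow_mult_distr.
  destruct (Nat.even n) eqn:Hev.
  - apply Nat.even_spec in Hev. destruct Hev as [m Hm].
    assert (E1 : (-1) ^ n = 1) by (rewrite Hm; apply pow_1_even).
    assert (E2 : (-1) ^ pred n = -1)
      by (replace (pred n) with (S (2 * (m - 1))) by lia; apply pow_1_odd).
    rewrite E1, E2, Rmult_1_l. ring.
  - assert (Hodd : Nat.Odd n)
      by (apply Nat.odd_spec; rewrite <- Nat.negb_even, Hev; reflexivity).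
    destruct Hodd as [m Hm].
    assert (E1 : (-1) ^ n = -1) by (replace n with (S (2 * m)) by lia; apply pow_1_odd).
    assert (E2 : (-1) ^ pred n = 1) by (replace (pred n) with (2 * m)%nat by lia; apply pow_1_even).
    rewrite E1, E2. replace (kappa * (-1 * x ^ n)) with (- (kappa * x ^ n)) by ring. ring.
Qed.

Lemma sigma_pos_range r t : 0 < r < r_max -> 0 < t < PI / 2 ->
  0 < kappa * (r * sin t) ^ n < P_max.
Proof.
  intros Hr Ht. pose proof PI2_Rlt_PI. pose proof kappa_pos.
  assert (0 < sin t) by (apply sin_gt_0; lra).
  assert (0 < r * sin t) by nra.
  assert (Hr' : Rabs r < r_max) by (rewrite Rabs_pos_eq; lra).
  pose proof (Rabs_def2 _ _ (Rabs_kappa_pow_lt _ (Rabs_r_sin_lt r t Hr'))).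
  split; [apply Rmult_lt_0_compat; [lra | apply pow_lt; lra] | lra].
Qed.

Lemma dJ_sign (G : R -> R) c r : 0 < r < r_max ->
  (forall s, in_dom s -> continuity_pt G s) ->
  (forall s, 0 < s < P_max -> 0 < c * (G s - G (- s))) ->
  (forall s, 0 < s < P_max -> 0 < c * G s) ->
  0 < c * dJ G r.
Proof.
  intros Hr HGc Hodd Heven. pose proof PI2_RGT_0. pose proof kappa_pos. pose proof N_pos.
  assert (Hr' : Rabs r < r_max) by (rewrite Rabs_pos_eq; lra).
  set (D := fun t => cos t ^ 2 * (G (sigma r t) * dsigma r t)).
  assert (HD : forall t, continuous D t).
  { intro t. apply (continuity_2d_pt_continuous_r
      (fun u v => cos v ^ 2 * (G (sigma u v) * dsigma u v))).
    apply continuity_2d_pt_dJ_integrand; assumption. }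
  assert (HDsum : forall t, continuous (fun t => D t + D (- t)) t).
  { intro t. apply (continuous_plus D); [apply HD|].
    apply (continuous_comp Ropp D); [|apply HD].
    apply continuity_pt_filterlim, ex_derive_continuity_pt. auto_derive. exact I. }
  unfold dJ. fold D. rewrite RInt_symmetric by (auto; lra).
  rewrite <- (RInt_scal (V := R_CompleteNormedModule)).
  2: { apply (ex_RInt_continuous (V := R_CompleteNormedModule)). intros t _. apply HDsum. }
  apply RInt_gt_0; [lra | intros t _; apply (continuous_scal_r c (fun t => D t + D (- t))), HDsum|].
  intros t Ht. change (scal c ?v) with (c * v). unfold D. rewrite dJ_integrand_pair.
  pose proof (sigma_pos_range r t Hr Ht) as Hs.
  pose proof (cos_gt_0 t ltac:(lra) ltac:(lra)). pose proof PI2_Rlt_PI.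
  assert (0 < sin t) by (apply sin_gt_0; lra).
  assert (0 < cos t ^ 2 * kappa * N * sin t * (r * sin t) ^ pred n).
  { assert (0 < cos t ^ 2) by (apply pow_lt; lra).
    assert (0 < (r * sin t) ^ pred n) by (apply pow_lt; nra).
    apply Rmult_lt_0_compat; [|assumption]. apply Rmult_lt_0_compat; [|assumption].
    apply Rmult_lt_0_compat; [|assumption]. apply Rmult_lt_0_compat; assumption. }
  destruct (Nat.even n).
  - specialize (Heven _ Hs). nra.
  - specialize (Hodd _ Hs). nra.
Qed.

Definition Q (r : R) := (N + 1) * (J Phi r - J Y r) / J Phi r.
Definition dQ (r : R) := (N + 1) * (J Y r * dJ dPhi r - J Phi r * dJ dY r) / J Phi r ^ 2.

Lemma J_Phi_pos r : Rabs r < r_max -> 0 < J Phi r.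
Proof.
  intros Hr. apply J_pos; [exact Hr | exact continuity_pt_Phi|].
  intros s Hs. destruct (Y_in_dom s Hs) as [HY [HA _]]. pose proof y_crit_pos.
  apply Rdiv_lt_0_compat; lra.
Qed.

Lemma J_Y_pos r : Rabs r < r_max -> 0 < J Y r.
Proof.
  intros Hr. apply J_pos; [exact Hr | exact continuity_pt_Y|].
  intros s Hs. destruct (Y_in_dom s Hs) as [HY _]. pose proof y_crit_pos. lra.
Qed.

Lemma dJ_dY_neg r : 0 < r < r_max -> dJ dY r < 0.
Proof.
  intros Hr. pose proof P_2_lt. pose proof P_max_bounds.
  cut (0 < -1 * dJ dY r); [lra|]. apply dJ_sign; [exact Hr | exact continuity_pt_dY | |].
  - intros s Hs. pose proof (dY_lt_dY_opp s Hs). lra.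
  - intros s Hs. assert (Hd : in_dom s) by (unfold in_dom; lra). pose proof (dY_neg s Hd). lra.
Qed.

Lemma dJ_dPhi_pos r : 0 < r < r_max -> 0 < dJ dPhi r.
Proof.
  intros Hr. pose proof P_2_lt. pose proof P_max_bounds.
  rewrite <- (Rmult_1_l (dJ dPhi r)). apply dJ_sign; [exact Hr | exact continuity_pt_dPhi | |].
  - intros s Hs. pose proof (dPhi_opp_lt_dPhi s Hs). lra.
  - intros s Hs. assert (Hd : in_dom s) by (unfold in_dom; lra).
    pose proof (dPhi_pos s Hd). lra.
Qed.

Lemma is_derive_Q r : Rabs r < r_max -> is_derive Q r (dQ r).
Proof.
  intros Hr. pose proof (J_Phi_pos r Hr).
  pose proof (is_derive_J Phi dPhi r Hr is_derive_Phi continuity_pt_dPhi) as HPhi.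
  pose proof (is_derive_J Y dY r Hr is_derive_Y continuity_pt_dY) as HY.
  unfold Q, dQ. auto_derive.
  - repeat split; try (eexists; eassumption). lra.
  - replace (Derive (fun x : R => J Phi x) r) with (dJ dPhi r)
      by (symmetry; apply is_derive_unique, HPhi).
    replace (Derive (fun x : R => J Y x) r) with (dJ dY r)
      by (symmetry; apply is_derive_unique, HY).
    field. lra.
Qed.

Lemma dQ_pos r : 0 < r < r_max -> 0 < dQ r.
Proof.
  intros Hr. assert (Hr' : Rabs r < r_max) by (rewrite Rabs_pos_eq; lra).
  pose proof (J_Phi_pos r Hr'). pose proof (J_Y_pos r Hr').
  pose proof (dJ_dY_neg r Hr). pose proof (dJ_dPhi_pos r Hr). pose proof N_pos.
  unfold dQ. apply Rdiv_lt_0_compat; [|apply pow_lt; lra].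
  apply Rmult_lt_0_compat; [lra|]. nra.
Qed.

Lemma sqrt_2h_bounds h : 0 < h < d_n n ->
  0 < sqrt (2 * h) < r_max /\ sqrt (2 * h) ^ 2 = 2 * h.
Proof.
  intros Hh. pose proof r_max_pos. pose proof r_max_sq.
  assert (E : sqrt (2 * h) ^ 2 = 2 * h) by (rewrite <- Rsqr_pow2; apply Rsqr_sqrt; lra).
  split; [split|exact E]; [apply sqrt_lt_R0; lra|].
  apply Rnot_le_lt. intro C. assert (r_max ^ 2 <= sqrt (2 * h) ^ 2) by (apply pow_incr; lra).
  lra.
Qed.

Lemma Btilde_eq_Q h : 0 < h < d_n n -> Btilde n h = Q (sqrt (2 * h)).
Proof.
  intros Hh. destruct (sqrt_2h_bounds h Hh) as [Hr E].
  assert (Hr' : Rabs (sqrt (2 * h)) < r_max) by (rewrite Rabs_pos_eq; lra).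
  pose proof (J_Phi_pos _ Hr').
  unfold Btilde. rewrite (B_eq h _ Hr E), (B0_eq h _ Hr E). unfold Q. field. lra.
Qed.

Definition dBtilde (h : R) := dQ (sqrt (2 * h)) / sqrt (2 * h).

Lemma is_derive_Btilde h : 0 < h < d_n n -> is_derive (Btilde n) h (dBtilde h).
Proof.
  intros Hh. destruct (sqrt_2h_bounds h Hh) as [Hr _].
  apply (is_derive_ext_loc (fun h => Q (sqrt (2 * h)))).
  - assert (He : 0 < Rmin h (d_n n - h)) by (apply Rmin_glb_lt; lra).
    exists (mkposreal _ He). intros y Hy. symmetry. apply Btilde_eq_Q.
    change (Rabs (y - h) < Rmin h (d_n n - h)) in Hy. apply Rabs_def2 in Hy.
    pose proof (Rmin_l h (d_n n - h)). pose proof (Rmin_r h (d_n n - h)). lra.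
  - unfold dBtilde. replace (dQ (sqrt (2 * h)) / sqrt (2 * h))
      with (/ sqrt (2 * h) * dQ (sqrt (2 * h))) by (field; lra).
    apply (is_derive_comp Q (fun h => sqrt (2 * h))).
    + apply is_derive_Q. rewrite Rabs_pos_eq; lra.
    + auto_derive; [lra|]. field. lra.
Qed.

Lemma dBtilde_pos h : 0 < h < d_n n -> 0 < dBtilde h.
Proof.
  intros Hh. destruct (sqrt_2h_bounds h Hh) as [Hr _].
  apply Rdiv_lt_0_compat; [apply dQ_pos, Hr | lra].
Qed.

Lemma Q_0 : Q 0 = 0.
Proof.
  assert (E : J Y 0 = J Phi 0).
  { unfold J. apply RInt_ext. intros x _. unfold sigma, Phi, A.
    rewrite Rmult_0_l, pow_i, Rmult_0_r, Y_0 by exact n_pos.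
    pose proof N_pos. f_equal. field. lra. }
  unfold Q. rewrite E, Rminus_eq_0. unfold Rdiv. ring.
Qed.

Lemma Btilde_lim_0 : filterlim (Btilde n) (at_right 0) (locally 0).
Proof.
  pose proof r_max_pos. pose proof r_max_sq.
  apply (filterlim_ext_loc (fun h => Q (sqrt (2 * h)))).
  - assert (Hd : 0 < d_n n) by nra.
    exists (mkposreal _ Hd). intros y Hy Hy0. symmetry. apply Btilde_eq_Q.
    change (Rabs (y - 0) < d_n n) in Hy. rewrite Rminus_0_r in Hy.
    apply Rabs_def2 in Hy. lra.
  - apply (filterlim_comp _ _ _ (fun h => sqrt (2 * h)) Q _ (locally 0)).
    + apply (filterlim_filter_le_1 _ (filter_le_within (F := locally 0) _)).
      assert (Hc : continuity_pt (fun h => sqrt (2 * h)) 0).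
      { apply (continuity_pt_comp (fun h => 2 * h) sqrt).
        - apply ex_derive_continuity_pt. auto_derive. exact I.
        - apply continuity_pt_sqrt. lra. }
      apply continuity_pt_filterlim in Hc. rewrite Rmult_0_r, sqrt_0 in Hc. exact Hc.
    + rewrite <- Q_0 at 2. apply (ex_derive_continuous Q).
      eexists. apply is_derive_Q. rewrite Rabs_R0. exact r_max_pos.
Qed.

End Oval.

Theorem proposition1 (n : nat) (Hn : (0 < n)%nat) :
  (forall h1 h2, 0 < h1 -> h1 < h2 -> h2 < d_n n ->
     Btilde n h1 < Btilde n h2) /\
  (forall h, 0 < h < d_n n ->
     ex_derive (Btilde n) h /\ 0 < Derive (Btilde n) h) /\
  filterlim (Btilde n) (at_right 0) (locally 0).
Proof.
  split; [|split].
  - intros h1 h2 H1 H12 H2.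
    apply (incr_function (Btilde n) 0 (d_n n) (dBtilde n)); simpl; try lra.
    + intros h Hh0 Hhd. apply is_derive_Btilde; auto.
    + intros h Hh0 Hhd. apply dBtilde_pos; auto.
  - intros h Hh. split.
    + eexists. apply is_derive_Btilde; assumption.
    + rewrite (is_derive_unique _ _ _ (is_derive_Btilde n Hn h Hh)).
      apply dBtilde_pos; assumption.
  - apply Btilde_lim_0, Hn.
Qed.
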